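(* Let $S$ be a ground set, $f$ a function from subsets of $S$ to subsets of $S$, $t\ge 1$ an integer and $u=\lfloor(\frac{t}{2}+1)^2\rfloor$. A set $\mathcal{C}\subseteq S$ is a $t$-parent-identifying scheme under the $f$-channel if and only if every subset $\mathcal{C}'\subseteq\mathcal{C}$ with $|\mathcal{C}'|\le u$ is a $t$-parent-identifying scheme under the $f$-channel.
   Context: Here $S$ is $Q^n$ or $2^Q$ for a finite set $Q$. A set $\mathcal{D}\subseteq S$ is a $t$-parent-identifying scheme under the $f$-channel if for every $\mathcal{D}'\subseteq\mathcal{D}$ with $|\mathcal{D}'|\le t$ and every $d\in f(\mathcal{D}')$, we have $\bigcap_{\mathcal{P}\subseteq\mathcal{D}:\,|\mathcal{P}|\le t,\ d\in f(\mathcal{P})}\mathcal{P}\neq\emptyset$. *)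

From mathcomp Require Import all_boot.
Set Implicit Arguments. Unset Strict Implicit. Unset Printing Implicit Defensive.

Definition t_pi_scheme (S : finType) (f : {set S} -> {set S}) (t : nat)
    (D : {set S}) : Prop :=
  forall D' : {set S}, D' \subset D -> #|D'| <= t ->
  forall d : S, d \in f D' ->
  exists x : S, forall P : {set S},
    P \subset D -> #|P| <= t -> d \in f P -> x \in P.

From mathcomp Require Import all_boot.
From mathcomp Require Import zify.

Set Implicit Arguments.
Unset Strict Implicit.
Unset Printing Implicit Defensive.

(* If C is not t-parent-identifying, some d has a nonempty family F of parent
   sets of size at most t with empty intersection.  Pick P1, P2 in F with
   k = |P1 :&: P2| minimal and, for each x in P1 :&: P2, a member g x of F
   missing x.  By minimality g x meets P1 :|: P2 in at least k + 1 points, so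
   the union of P1, P2 and the g x has at most (2t - k) + k (t - k - 1)
   = (k + 2)(t - k) <= (t + 2)^2 / 4 elements, and inside it the parent sets
   P1, P2, g x of d still have empty intersection. *)

Lemma quarter_square_bound (t k : nat) :
  k <= t -> 2 * t - k + k * (t - k - 1) <= (t + 2) ^ 2 %/ 4.
Proof.
rewrite leq_eqVlt => /predU1P[-> | lt_kt]; rewrite leq_divRL // mulnC.
  by apply: leq_trans (nat_AGM2 t 2).1; nia.
have -> : 2 * t - k + k * (t - k - 1) = (k + 2) * (t - k) by nia.
by have := (nat_AGM2 (k + 2) (t - k)).1; rewrite addnAC (subnKC (ltnW lt_kt)).
Qed.

Lemma cardsDU_lt (T : finType) (A B Q : {set T}) :
  #|A :&: B| <= #|A :&: Q| -> #|A :&: B| <= #|B :&: Q| ->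
  #|A :&: B :&: Q| < #|A :&: B| ->
  #|Q :\: (A :|: B)| + #|A :&: B| < #|Q|.
Proof.
move=> leA leB ltAB.
have := cardsID (A :|: B) Q; have := cardsUI (A :&: Q) (B :&: Q).
by rewrite -setIUl setIACA setIid setIC; lia.
Qed.

Section SmallSubfamily.

Variables (T : finType) (t : nat) (F : {set {set T}}).
Hypotheses (card_F : {in F, forall P : {set T}, #|P| <= t})
           (bigcapF : \bigcap_(P in F) P = set0).

Lemma bigcap_eq0_avoid (x : T) : exists2 P, P \in F & x \notin P.
Proof.
apply/exists_inP; rewrite -negb_forall_in; apply: contraFN (in_set0 x).
by rewrite -bigcapF => /forall_inP x_in_F; apply/bigcapP.
Qed.

Section MinimalPair.

Variables (P1 P2 : {set T}).
Hypotheses (P1F : P1 \in F) (P2F : P2 \in F)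
           (min_P12 : {in F &, forall Q1 Q2 : {set T},
                         #|P1 :&: P2| <= #|Q1 :&: Q2|}).

Let I := P1 :&: P2.

Lemma card_outside_minimal_pair (Q : {set T}) (x : T) :
  Q \in F -> x \in I -> x \notin Q -> #|Q :\: (P1 :|: P2)| <= t - #|I| - 1.
Proof.
move=> QF xI xQ.
have ltI : #|I :&: Q| < #|I|.
  rewrite proper_card // properEneq subsetIl andbT.
  by apply: contraNneq xQ => eqQI; move: xI; rewrite -eqQI => /setIP[].
have := cardsDU_lt (min_P12 P1F QF) (min_P12 P2F QF) ltI.
by have := card_F QF; rewrite /I; lia.
Qed.

Variable g : T -> {set T}.
Hypotheses (gF : forall x, g x \in F) (x_notin_g : forall x, x \notin g x).

Let G := P1 |: (P2 |: g @: I).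

Lemma minimal_pair_subfamily : G \subset F.
Proof.
by apply/subsetP => P /setU1P[-> // | /setU1P[-> // | /imsetP[x _ ->]]].
Qed.

Lemma minimal_pair_subfamily_neq0 : G != set0.
Proof. by apply/set0Pn; exists P1; rewrite setU11. Qed.

Lemma bigcap_minimal_pair_subfamily : \bigcap_(P in G) P = set0.
Proof.
apply/setP => x; rewrite inE; apply/bigcapP => x_in_G.
have xI : x \in I by rewrite inE !x_in_G // !inE eqxx ?orbT.
have gxG : g x \in G by rewrite !inE (imset_f g xI) !orbT.
by have := x_notin_g x; rewrite x_in_G.
Qed.

Lemma card_cover_minimal_pair_subfamily : #|cover G| <= (t + 2) ^ 2 %/ 4.
Proof.
set U := P1 :|: P2.
have le_It : #|I| <= t.
  exact: leq_trans (subset_leq_card (subsetIl _ _)) (card_F P1F).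
have sub_cover : cover G \subset U :|: \bigcup_(x in I) (g x :\: U).
  rewrite /cover !bigcup_setU !big_set1 -/(cover _) cover_imset setUA.
  apply/subsetP => y /setUP[yU | /bigcupP[x xI ygx]]; first by rewrite inE yU.
  rewrite inE; case: (boolP (y \in U)) => //= yU.
  by apply/bigcupP; exists x; rewrite // inE yU.
have card_outside : #|\bigcup_(x in I) (g x :\: U)| <= #|I| * (t - #|I| - 1).
  rewrite -cover_imset; apply: leq_trans (leq_card_cover _).1 _.
  apply: (@leq_trans (\sum_(A in [set g x :\: U | x in I]) (t - #|I| - 1))).
    apply: leq_sum => A /imsetP[x xI ->].
    exact: card_outside_minimal_pair (gF x) xI (x_notin_g x).
  by rewrite sum_nat_const leq_mul2r leq_imset_card orbT.
have := leq_trans (subset_leq_card sub_cover) (leq_card_setU _ _).1.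
have := cardsU P1 P2; have := subset_leq_card (subsetIl P1 P2); rewrite -/U -/I.
have := quarter_square_bound le_It; have := card_F P1F; have := card_F P2F.
lia.
Qed.

End MinimalPair.

Lemma small_subfamily_bigcap_eq0 :
  F != set0 ->
  exists2 G : {set {set T}}, G \subset F &
    [/\ G != set0, #|cover G| <= (t + 2) ^ 2 %/ 4 & \bigcap_(P in G) P = set0].
Proof.
case/set0Pn => P0 P0F.
have P00 : (P0, P0) \in setX F F by rewrite in_setX P0F.
case: (arg_minnP (fun p : {set T} * {set T} => #|p.1 :&: p.2|) P00).
move=> [P1 P2] /setXP[P1F P2F] /= min_pairs.
have min_P12 : {in F &, forall Q1 Q2 : {set T}, #|P1 :&: P2| <= #|Q1 :&: Q2|}.
  by move=> Q1 Q2 Q1F Q2F; apply: (min_pairs (Q1, Q2)); apply/setXP.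
have [g gF x_notin_g] := fin_all_exists2 bigcap_eq0_avoid.
exists (P1 |: (P2 |: g @: (P1 :&: P2))).
  exact: minimal_pair_subfamily.
split.
- exact: minimal_pair_subfamily_neq0.
- exact (card_cover_minimal_pair_subfamily P1F P2F min_P12 gF x_notin_g).
- exact: bigcap_minimal_pair_subfamily.
Qed.

End SmallSubfamily.

Definition parent_sets (S : finType) (f : {set S} -> {set S}) (t : nat)
    (D : {set S}) (d : S) : {set {set S}} :=
  [set P : {set S} | [&& P \subset D, #|P| <= t & d \in f P]].

Lemma t_pi_schemeP (S : finType) (f : {set S} -> {set S}) (t : nat)
    (D : {set S}) :
  t_pi_scheme f t D <->
  forall d, parent_sets f t D d != set0 ->
    \bigcap_(P in parent_sets f t D d) P != set0.
Proof.
split=> [piD d /set0Pn[D'] | capD D' sD' cD' d dD'].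
  rewrite inE => /and3P[sD' cD' dD'].
  have [x x_in] := piD D' sD' cD' d dD'.
  apply/set0Pn; exists x; apply/bigcapP => P.
  by rewrite inE => /and3P[]; apply: x_in.
have /set0Pn[x /bigcapP x_in] : \bigcap_(P in parent_sets f t D d) P != set0.
  by apply: capD; apply/set0Pn; exists D'; rewrite inE sD' cD'.
by exists x => P sP cP dP; apply: x_in; rewrite inE sP cP.
Qed.

Lemma t_pi_schemeS (S : finType) (f : {set S} -> {set S}) (t : nat)
    (C D : {set S}) :
  D \subset C -> t_pi_scheme f t C -> t_pi_scheme f t D.
Proof.
move=> sDC piC D' sD' cD' d dD'.
have [x x_in] := piC D' (subset_trans sD' sDC) cD' d dD'.
by exists x => P sP; apply: x_in; apply: subset_trans sP sDC.
Qed.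

Theorem corollary1 (S : finType) (f : {set S} -> {set S}) (t : nat)
    (C : {set S}) :
  1 <= t ->
  (t_pi_scheme f t C <->
   forall C' : {set S}, C' \subset C -> #|C'| <= (t + 2) ^ 2 %/ 4 ->
     t_pi_scheme f t C').
Proof.
move=> _; split=> [piC C' sC' _ | small_pi]; first exact: t_pi_schemeS piC.
apply/t_pi_schemeP => d nz_parents; apply/negP => /eqP cap0.
have card_parents : {in parent_sets f t C d, forall P : {set S}, #|P| <= t}.
  by move=> P; rewrite inE => /and3P[].
have [G sG [nzG card_G capG]] :=
  small_subfamily_bigcap_eq0 card_parents cap0 nz_parents.
have sGC : cover G \subset C.
  by apply/bigcupsP => P /(subsetP sG); rewrite inE => /and3P[].
have sG_parents : G \subset parent_sets f t (cover G) d.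
  apply/subsetP => P PG; have := subsetP sG P PG.
  by rewrite !inE => /and3P[_ -> ->]; rewrite bigcup_sup.
have /set0Pn[x /bigcapP x_in] :
    \bigcap_(P in parent_sets f t (cover G) d) P != set0.
  have /t_pi_schemeP piG := small_pi _ sGC card_G; apply: piG.
  case/set0Pn: nzG => P PG.
  by apply/set0Pn; exists P; apply: (subsetP sG_parents).
have : x \in \bigcap_(P in G) P.
  by apply/bigcapP => P /(subsetP sG_parents); apply: x_in.
by rewrite capG inE.
Qed.
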